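(* Let $\mathcal T_{\mathbf q}={\mathbb K}_{\mathbf q}[T_1^{\pm1},\ldots,T_n^{\pm1}]$ be a simple quantum torus and let $R=\mathcal T_{\mathbf q}[X_1,\ldots,X_m]$ be the commutative polynomial ring over $\mathcal T_{\mathbf q}$ in $m$ central variables. Then: (a) $\operatorname{Z}(R)={\mathbb K}[X_1,\ldots,X_m]$; (b) $\operatorname{Der}(R)=\operatorname{InnDer}(R)\oplus\bigoplus_{i=1}^n\operatorname{Z}(R)D_i\oplus\bigoplus_{j=1}^m\operatorname{Z}(R)\partial_j$, where $D_i,\partial_j$ are the derivations of $R$ defined by $D_i(T_k)=\delta_{ik}T_k$, $D_i(X_k)=0$, $\partial_j(T_k)=0$, $\partial_j(X_k)=\delta_{jk}$.
   Context: ${\mathbb K}$ is a field of characteristic $0$. For a multiplicatively skew-symmetric matrix $\mathbf q=(q_{ij})\in M_n({\mathbb K}^* )$ (i.e. $q_{ii}=1$, $q_{ij}=q_{ji}^{-1}$), the quantum torus ${\mathbb K}_{\mathbf q}[T_1^{\pm1},\ldots,T_n^{\pm1}]$ is the ${\mathbb K}$-algebra generated by $T_1^{\pm1},\ldots,T_n^{\pm1}$ with relations $T_iT_i^{-1}=T_i^{-1}T_i=1$ and $T_jT_i=q_{ij}T_iT_j$. It is simple iff its center is ${\mathbb K}$. $\operatorname{Z}$, $\operatorname{Der}$, $\operatorname{InnDer}$ denote center, ${\mathbb K}$-derivations and inner derivations. *)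

From HB Require Import structures.
From mathcomp Require Import all_boot all_order all_algebra.
Set Implicit Arguments. Unset Strict Implicit. Unset Printing Implicit Defensive.
Import GRing.Theory.
Local Open Scope ring_scope.

Definition zpow {R : pzRingType} (t ti : R) (z : int) : R :=
  match z with Posz k => t ^+ k | Negz k => ti ^+ k.+1 end.

Definition tmono {R : pzRingType} {n : nat} (T Ti : 'I_n -> R)
  (a : {ffun 'I_n -> int}) : R := \prod_(i < n) zpow (T i) (Ti i) (a i).

Definition xmono {R : pzRingType} {m : nat} (X : 'I_m -> R)
  (b : {ffun 'I_m -> nat}) : R := \prod_(j < m) X j ^+ b j.

Definition txmono {R : pzRingType} {n m : nat} (T Ti : 'I_n -> R) (X : 'I_m -> R)
  (p : {ffun 'I_n -> int} * {ffun 'I_m -> nat}) : R :=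
  tmono T Ti p.1 * xmono X p.2.

Definition in_span {K : fieldType} {R : lmodType K} {I : eqType} (f : I -> R)
  (r : R) : Prop :=
  exists (s : seq I) (c : I -> K), r = \sum_(i <- s) c i *: f i.

Definition lin_indep {K : fieldType} {R : lmodType K} {I : eqType} (f : I -> R)
  : Prop :=
  forall (s : seq I) (c : I -> K), uniq s -> \sum_(i <- s) c i *: f i = 0 ->
    forall i, i \in s -> c i = 0.

Definition qtorus_poly {K : fieldType} {R : algType K} {n m : nat}
  (q : 'I_n -> 'I_n -> K) (T Ti : 'I_n -> R) (X : 'I_m -> R) : Prop :=
  ((forall i, q i i = 1) /\ (forall i j, q i j * q j i = 1)) /\
  (forall i, T i * Ti i = 1 /\ Ti i * T i = 1) /\
  (forall i j, T j * T i = q i j *: (T i * T j)) /\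
  (forall j r, X j * r = r * X j) /\
  (forall r, in_span (txmono T Ti X) r) /\
  lin_indep (txmono T Ti X).

(* The subring S (given as a predicate containing 0,1, closed under ring ops)
   is a simple ring: nonzero, and its only two-sided ideals are 0 and S. *)
Definition simple_sub {R : pzRingType} (S : R -> Prop) : Prop :=
  (exists x, S x /\ x <> 0) /\
  forall I : R -> Prop,
    (forall x, I x -> S x) -> I 0 ->
    (forall x y, I x -> I y -> I (x - y)) ->
    (forall a x, S a -> I x -> I (a * x) /\ I (x * a)) ->
    (forall x, I x -> x = 0) \/ (forall x, S x -> I x).

Definition central {R : pzRingType} (r : R) : Prop := forall y, r * y = y * r.

Definition is_derivation {K : fieldType} {R : algType K} (d : R -> R) : Prop :=
  (forall (k : K) x y, d (k *: x + y) = k *: d x + d y) /\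
  (forall x y, d (x * y) = d x * y + x * d y).

Definition is_Dfamily {K : fieldType} {R : algType K} {n m : nat}
  (T : 'I_n -> R) (X : 'I_m -> R) (D : 'I_n -> R -> R) : Prop :=
  forall i, is_derivation (D i) /\
    (forall k, D i (T k) = if i == k then T k else 0) /\
    (forall k, D i (X k) = 0).

Definition is_Pfamily {K : fieldType} {R : algType K} {n m : nat}
  (T : 'I_n -> R) (X : 'I_m -> R) (P : 'I_m -> R -> R) : Prop :=
  forall j, is_derivation (P j) /\
    (forall k, P j (T k) = 0) /\
    (forall k, P j (X k) = if j == k then 1 else 0).

(** Conjugation by [T_k] acts on every monomial [T^a X^b] by a nonzero scalar
    (its weight).  A monomial of trivial weight has [a = 0]: otherwise [T^a] would be
    central in the simple torus, so [T^a - 1] would generate the unit ideal, while in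
    [(T^a - 1) y] the top and bottom terms of [y] for the grading [p |-> <a, p>]
    survive.  Hence the centre is spanned by the [X^b].
    For a derivation [d], the elements [u_k = d(T_k) T_k^-1] form a 1-cocycle for the
    conjugation action; on monomials of nontrivial weight it is a coboundary and its
    remaining part is central.  So [d] minus an inner derivation, [\sum z_k D_k] and
    [\sum d(X_j) ∂_j] kills all generators, hence vanishes.  Uniqueness of the
    decomposition follows by evaluating on the generators. *)

From HB Require Import structures.
From mathcomp Require Import all_boot all_order all_algebra.
From mathcomp Require Import zify ring.
Set Implicit Arguments. Unset Strict Implicit. Unset Printing Implicit Defensive.
Import Order.TTheory GRing.Theory Num.Theory.
Local Open Scope ring_scope.

Lemma sum_pred1_uniq (I : eqType) (V : nmodType) (s : seq I) (F : I -> V) p :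
  uniq s -> \sum_(i <- s | i == p) F i = if p \in s then F p else 0.
Proof.
move=> s_uniq; case: ifP => [ps | /negbT pNs].
  by rewrite big_mkcond (bigD1_seq p) //= eqxx big1 ?addr0 // => i /negbTE ->.
by rewrite big1_seq // => i /andP[/eqP -> ps]; rewrite ps in pNs.
Qed.

Section LinearFunctions.
Variables (K : fieldType) (V W : lmodType K) (d : V -> W).
Hypothesis d_lin : linear d.

Let dL : {linear V -> W} := HB.pack d (GRing.isLinear.Build K V W *:%R d d_lin).

Lemma lin0 : d 0 = 0. Proof. exact: linear0 dL. Qed.
Lemma linD x y : d (x + y) = d x + d y. Proof. exact: linearD dL x y. Qed.
Lemma linB x y : d (x - y) = d x - d y. Proof. exact: linearB dL x y. Qed.
Lemma linZ k x : d (k *: x) = k *: d x. Proof. exact: linearZZ dL k x. Qed.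
Lemma lin_sum (J : Type) (s : seq J) (F : J -> V) :
  d (\sum_(j <- s) F j) = \sum_(j <- s) d (F j).
Proof. exact: (linear_sum dL). Qed.
End LinearFunctions.

Section Span.
Variables (K : fieldType) (I : eqType).

Lemma sum_regroup (W : lmodType K) (g : I -> W) (s : seq (I * K)) (u : seq I) :
  uniq u -> {subset map fst s <= u} ->
  \sum_(x <- s) x.2 *: g x.1 = \sum_(i <- u) (\sum_(x <- s | x.1 == i) x.2) *: g i.
Proof.
move=> u_uniq su; under [RHS]eq_bigr do rewrite scaler_suml.
rewrite (exchange_big_dep xpredT) //=; apply: eq_big_seq => x xs.
rewrite (eq_bigl (fun i => i == x.1)) => [|i]; last exact: eq_sym.
by rewrite sum_pred1_uniq // su ?(map_f fst xs).
Qed.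

Variables (V : lmodType K) (f : I -> V).

Lemma in_spanP v :
  in_span f v <-> exists s : seq (I * K), v = \sum_(x <- s) x.2 *: f x.1.
Proof.
split=> [[s [c ->]] | [s ->]]; first by exists [seq (i, c i) | i <- s]; rewrite big_map.
exists (undup (map fst s)), (fun i => \sum_(x <- s | x.1 == i) x.2).
by apply: sum_regroup => [|i]; rewrite ?undup_uniq ?mem_undup.
Qed.

Lemma in_span_f i : in_span f (f i).
Proof. by exists [:: i], (fun=> 1); rewrite big_seq1 scale1r. Qed.

Lemma in_span0 : in_span f 0.
Proof. by exists [::], (fun=> 0); rewrite big_nil. Qed.

Lemma in_spanD x y : in_span f x -> in_span f y -> in_span f (x + y).
Proof.
by move=> /in_spanP[s ->] /in_spanP[s' ->]; apply/in_spanP; exists (s ++ s'); rewrite big_cat.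
Qed.

Lemma in_spanZ k x : in_span f x -> in_span f (k *: x).
Proof.
move=> /in_spanP[s ->]; apply/in_spanP; exists [seq (x.1, k * x.2) | x <- s].
by rewrite big_map scaler_sumr; apply: eq_bigr => z _; rewrite scalerA.
Qed.

Lemma in_spanB x y : in_span f x -> in_span f y -> in_span f (x - y).
Proof. by move=> Sx Sy; rewrite -scaleN1r; apply/in_spanD/in_spanZ. Qed.

Lemma in_span_sum (J : Type) (s : seq J) (F : J -> V) :
  (forall j, in_span f (F j)) -> in_span f (\sum_(j <- s) F j).
Proof.
move=> SF; elim: s => [|j s IH]; first by rewrite big_nil; apply: in_span0.
by rewrite big_cons; apply: in_spanD.
Qed.
Lemma eq_lin_span (W : lmodType K) (g h : V -> W) :
  linear g -> linear h -> (forall i, g (f i) = h (f i)) ->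
  forall v, in_span f v -> g v = h v.
Proof.
move=> g_lin h_lin eq_gh _ [s [c ->]]; rewrite !lin_sum //.
by apply: eq_bigr => i _; rewrite !linZ // eq_gh.
Qed.
End Span.

Section Coordinates.
Variables (K : fieldType) (V : lmodType K) (I : choiceType) (f : I -> V).
Hypothesis f_span : forall v, in_span f v.

Let span_rep_ex v : exists s : seq (I * K), v == \sum_(x <- s) x.2 *: f x.1.
Proof. by have /in_spanP[s ->] := f_span v; exists s. Qed.

(* The representation of [v] chosen here may repeat indices; [bcoord] adds up repetitions. *)
Definition span_rep v : seq (I * K) := xchoose (span_rep_ex v).
Definition bcoord (p : I) (v : V) : K := \sum_(x <- span_rep v | x.1 == p) x.2.
Definition supp v : seq I := [seq p <- undup (map fst (span_rep v)) | bcoord p v != 0].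

Lemma supp_uniq v : uniq (supp v).
Proof. exact: filter_uniq (undup_uniq _). Qed.

Lemma mem_supp p v : (p \in supp v) = (bcoord p v != 0).
Proof.
rewrite mem_filter mem_undup andb_idr // => cp; apply: contraTT cp => pNrep.
rewrite negbK /bcoord big1_seq // => x /andP[/eqP xp /(map_f fst)].
by rewrite /= xp (negbTE pNrep).
Qed.

Lemma sum_bcoord_supp (W : lmodType K) (g : I -> W) v u : uniq u -> {subset supp v <= u} ->
  \sum_(p <- u) bcoord p v *: g p = \sum_(p <- supp v) bcoord p v *: g p.
Proof.
move=> u_uniq su; rewrite (bigID (fun p => bcoord p v != 0)) /=.
rewrite [X in _ + X]big1 => [|p /negPn/eqP ->]; last by rewrite scale0r.
rewrite addr0 -big_filter; apply/perm_big/uniq_perm => [||p]; rewrite ?supp_uniq ?filter_uniq //.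
by rewrite mem_filter -mem_supp andb_idr // => /su.
Qed.

Lemma bcoord_expand v : v = \sum_(p <- supp v) bcoord p v *: f p.
Proof.
have u_uniq := undup_uniq (map fst (span_rep v)).
rewrite -(sum_bcoord_supp _ u_uniq) => [|p]; last by rewrite mem_filter => /andP[].
by rewrite {1}(eqP (xchooseP (span_rep_ex v))) (sum_regroup f u_uniq) // => i; rewrite mem_undup.
Qed.

Lemma bcoord_expand_on v u : uniq u -> {subset supp v <= u} ->
  v = \sum_(p <- u) bcoord p v *: f p.
Proof. by move=> u_uniq su; rewrite sum_bcoord_supp // -bcoord_expand. Qed.

Hypothesis f_free : lin_indep f.

Lemma bcoord_lincomb (u : seq I) (c : I -> K) p : uniq u ->
  bcoord p (\sum_(i <- u) c i *: f i) = if p \in u then c p else 0.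
Proof.
move=> u_uniq; set v := \sum_(i <- u) _.
set w := undup (supp v ++ u); have w_uniq : uniq w := undup_uniq _.
have sub_w i : i \in supp v \/ i \in u -> i \in w.
  by rewrite mem_undup mem_cat => -[] ->; rewrite ?orbT.
pose c' i := if i \in u then c i else 0.
have v_on_w : v = \sum_(i <- w) c' i *: f i.
  rewrite /c' (eq_bigr (fun i => if i \in u then c i *: f i else 0)) => [|i _]; last first.
    by case: ifP; rewrite ?scale0r.
  rewrite -big_mkcond -big_filter; apply/perm_big/uniq_perm => [||i]; rewrite ?filter_uniq //.
  by rewrite mem_filter andb_idr // => iu; apply: sub_w; right.
have : \sum_(i <- w) (bcoord i v - c' i) *: f i = 0.
  under eq_bigr do rewrite scalerBl.
  by rewrite sumrB -v_on_w -bcoord_expand_on ?subrr // => i iv; apply: sub_w; left.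
move/(f_free w_uniq) => bcoord_eq; case: (boolP (p \in w)) => [pw | pNw].
  by apply/eqP; rewrite -/(c' p) -subr_eq0 bcoord_eq.
have [pNv pNu] : p \notin supp v /\ p \notin u.
  by split; apply: contra pNw => pv; apply: sub_w; [left | right].
by move: pNv; rewrite mem_supp negbK (negbTE pNu) => /eqP.
Qed.

Lemma bcoord_f p i : bcoord p (f i) = (p == i)%:R.
Proof.
have := bcoord_lincomb (fun=> 1) p (isT : uniq [:: i]).
by rewrite big_seq1 scale1r inE => ->; case: eqP.
Qed.

Lemma bcoord_is_linear p : linear (bcoord p : V -> K^o).
Proof.
move=> k v w; set u := undup (supp v ++ supp w); have u_uniq : uniq u := undup_uniq _.
have [sv sw] : {subset supp v <= u} /\ {subset supp w <= u}.
  by split=> i iv; rewrite mem_undup mem_cat iv ?orbT.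
rewrite {1}(bcoord_expand_on u_uniq sv) {1}(bcoord_expand_on u_uniq sw) scaler_sumr -big_split.
rewrite (eq_bigr (fun i => (k * bcoord i v + bcoord i w) *: f i)) => [|i _]; last first.
  by rewrite scalerDl scalerA.
rewrite bcoord_lincomb //; case: ifP => // /negbT.
rewrite mem_undup mem_cat negb_or !mem_supp !negbK => /andP[/eqP -> /eqP ->].
by rewrite addr0; exact: (esym (mulr0 k)).
Qed.

Lemma bcoord_inj v w : (forall p, bcoord p v = bcoord p w) -> v = w.
Proof.
move=> eq_vw; rewrite [LHS]bcoord_expand [RHS]bcoord_expand.
rewrite (perm_big (supp w)); last first.
  by apply: uniq_perm; rewrite ?supp_uniq // => p; rewrite !mem_supp eq_vw.
by apply: eq_bigr => p _; rewrite eq_vw.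
Qed.

Lemma bcoord0 p : bcoord p 0 = 0. Proof. exact: lin0 (bcoord_is_linear p). Qed.
Lemma bcoordD p v w : bcoord p (v + w) = bcoord p v + bcoord p w.
Proof. exact: (linD (bcoord_is_linear p) v w). Qed.
Lemma bcoordB p v w : bcoord p (v - w) = bcoord p v - bcoord p w.
Proof. exact: (linB (bcoord_is_linear p) v w). Qed.
Lemma bcoordZ p k v : bcoord p (k *: v) = k * bcoord p v.
Proof. exact: (linZ (bcoord_is_linear p) k v). Qed.
Lemma bcoord_sum p (J : Type) (s : seq J) (F : J -> V) :
  bcoord p (\sum_(j <- s) F j) = \sum_(j <- s) bcoord p (F j).
Proof. exact: (lin_sum (bcoord_is_linear p) s F). Qed.

Lemma bcoord_monomial_map (phi : V -> V) (kap : I -> K) (tau : I -> I) :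
  linear phi -> injective tau -> (forall i, phi (f i) = kap i *: f (tau i)) ->
  forall p v, bcoord (tau p) (phi v) = kap p * bcoord p v.
Proof.
move=> phi_lin tau_inj phi_f p v; rewrite {1}(bcoord_expand v) lin_sum // bcoord_sum.
rewrite (eq_bigr (fun i => if i == p then kap p * bcoord p v else 0)) => [|i _]; last first.
  rewrite linZ // phi_f !bcoordZ bcoord_f (inj_eq tau_inj) eq_sym.
  by case: eqP => [-> | _]; rewrite ?mulr1 ?mulr0 // mulrC.
rewrite -big_mkcond sum_pred1_uniq ?supp_uniq // mem_supp.
by case: eqP => // ->; rewrite mulr0.
Qed.

Definition lin_ext (W : lmodType K) (g : I -> W) (v : V) : W :=
  \sum_(p <- supp v) bcoord p v *: g p.

Lemma lin_ext_is_linear (W : lmodType K) (g : I -> W) : linear (lin_ext g).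
Proof.
move=> k v w; set x := k *: v + w.
set u := undup (supp v ++ supp w ++ supp x); have u_uniq : uniq u := undup_uniq _.
have [sv sw sx] : [/\ {subset supp v <= u}, {subset supp w <= u} & {subset supp x <= u}].
  by split=> i iy; rewrite mem_undup !mem_cat iy ?orbT.
rewrite /lin_ext -(sum_bcoord_supp g u_uniq sv) -(sum_bcoord_supp g u_uniq sw).
rewrite -(sum_bcoord_supp g u_uniq sx).
rewrite scaler_sumr -big_split; apply: eq_bigr => i _.
by rewrite bcoord_is_linear scalerDl scalerA.
Qed.

Lemma lin_ext_f (W : lmodType K) (g : I -> W) i : lin_ext g (f i) = g i.
Proof.
rewrite /lin_ext -(sum_bcoord_supp g (isT : uniq [:: i])) => [|p].
  by rewrite big_seq1 bcoord_f eqxx scale1r.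
by rewrite mem_supp bcoord_f inE; case: (p == i); rewrite ?eqxx.
Qed.
End Coordinates.

Section Central.
Variable R : pzRingType.

Lemma centralM (x y : R) : central x -> central y -> central (x * y).
Proof. by move=> xC yC z; rewrite -mulrA yC mulrA xC mulrA. Qed.

Lemma centralX (x : R) k : central x -> central (x ^+ k).
Proof. by move=> xC y; apply/commr_sym/commrX. Qed.

Lemma central_prod (J : Type) (s : seq J) (F : J -> R) :
  (forall j, central (F j)) -> central (\prod_(j <- s) F j).
Proof.
move=> FC; elim: s => [|j s IH] y; first by rewrite big_nil mul1r mulr1.
by rewrite big_cons; apply: centralM.
Qed.

Lemma central_sum (J : Type) (s : seq J) (F : J -> R) :
  (forall j, central (F j)) -> central (\sum_(j <- s) F j).
Proof. by move=> FC y; rewrite mulr_suml mulr_sumr; apply: eq_bigr => j _; apply: FC. Qed.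
End Central.

Lemma centralZ (K : fieldType) (R : algType K) k (x : R) : central x -> central (k *: x).
Proof. by move=> xC y; rewrite -scalerAl xC scalerAr. Qed.

Section Derivations.
Variables (K : fieldType) (R : algType K).

Lemma derivation_ext (d d' : R -> R) :
  (forall x, d x = d' x) -> is_derivation d -> is_derivation d'.
Proof. by move=> eq_d [d_lin d_mul]; split=> [k x y | x y]; rewrite -!eq_d. Qed.

Lemma der1 (d : R -> R) : is_derivation d -> d 1 = 0.
Proof.
case=> _ /(_ 1 1); rewrite !mulr1 mul1r => /(congr1 (fun v => v - d 1)).
by rewrite subrr addrK.
Qed.

Lemma derD (d1 d2 : R -> R) : is_derivation d1 -> is_derivation d2 ->
  is_derivation (fun x => d1 x + d2 x).
Proof.
move=> [L1 M1] [L2 M2]; split=> [k x y | x y]; first by rewrite L1 L2 scalerDr addrACA.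
by rewrite M1 M2 mulrDl mulrDr addrACA.
Qed.

Lemma derB (d1 d2 : R -> R) : is_derivation d1 -> is_derivation d2 ->
  is_derivation (fun x => d1 x - d2 x).
Proof.
move=> [L1 M1] [L2 M2]; split=> [k x y | x y]; first by rewrite L1 L2 scalerBr addrACA opprD.
by rewrite M1 M2 mulrBl mulrBr addrACA opprD.
Qed.

Lemma der_sum (J : Type) (s : seq J) (F : J -> R -> R) :
  (forall j, is_derivation (F j)) -> is_derivation (fun x => \sum_(j <- s) F j x).
Proof.
move=> F_der; elim: s => [|j s IH].
  by split=> [k x y | x y]; rewrite !big_nil ?scaler0 ?mulr0 ?mul0r ?addr0.
by apply: derivation_ext (derD (F_der j) IH) => x; rewrite big_cons.
Qed.

Lemma der_centralM (z : R) (d : R -> R) : central z -> is_derivation d ->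
  is_derivation (fun x => z * d x).
Proof.
move=> zC [d_lin d_mul]; split=> [k x y | x y]; first by rewrite d_lin mulrDr scalerAr.
by rewrite d_mul mulrDr mulrA; congr (_ + _); rewrite !mulrA zC.
Qed.

Lemma der_inner (r : R) : is_derivation (fun x : R => r * x - x * r).
Proof.
split=> [k x y | x y]; first by rewrite mulrDr mulrDl -scalerAr -scalerAl scalerBr addrACA opprD.
by rewrite mulrBl mulrBr !mulrA addrA subrK.
Qed.

Section Kernel.
Variable d : R -> R.
Hypothesis d_der : is_derivation d.

Lemma der_mul_eq0 x y : d x = 0 -> d y = 0 -> d (x * y) = 0.
Proof. by case: d_der => _ d_mul dx dy; rewrite d_mul dx dy mul0r mulr0 addr0. Qed.

Lemma der_expr_eq0 x k : d x = 0 -> d (x ^+ k) = 0.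
Proof.
move=> dx; elim: k => [|k IH]; first by rewrite expr0 der1.
by rewrite exprS der_mul_eq0.
Qed.

Lemma der_prod_eq0 (J : Type) (s : seq J) (F : J -> R) :
  (forall j, d (F j) = 0) -> d (\prod_(j <- s) F j) = 0.
Proof.
move=> dF; elim: s => [|j s IH]; first by rewrite big_nil der1.
by rewrite big_cons der_mul_eq0.
Qed.

Lemma der_inv_eq0 t t' : t * t' = 1 -> t' * t = 1 -> d t = 0 -> d t' = 0.
Proof.
case: d_der => _ d_mul tt' t't dt; have := d_mul t t'.
rewrite tt' der1 // dt mul0r add0r => /esym dtt'.
by rewrite -[d t']mul1r -t't -mulrA dtt' mulr0.
Qed.
End Kernel.

Lemma derivation_span (I : eqType) (f : I -> R) (d : R -> R) :
  (forall r, in_span f r) -> linear d ->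
  (forall i j, d (f i * f j) = d (f i) * f j + f i * d (f j)) -> is_derivation d.
Proof.
move=> f_span d_lin d_f; split=> // x y; move: x (f_span x) y (f_span y).
have lin_mull (a : R) : linear (fun x => d (a * x)).
  by move=> k u v; rewrite mulrDr -scalerAr d_lin.
have lin_mulr (a : R) : linear (fun x => d (x * a)).
  by move=> k u v; rewrite mulrDl -scalerAl d_lin.
have lin_leib_l (a : R) : linear (fun x => d a * x + a * d x).
  by move=> k u v; rewrite d_lin mulrDr mulrDr -scalerAr -scalerAr scalerDr addrACA.
have lin_leib_r (a : R) : linear (fun x => d x * a + x * d a).
  by move=> k u v; rewrite d_lin mulrDl mulrDl -scalerAl -scalerAl scalerDr addrACA.
have leib_f i y : in_span f y -> d (f i * y) = d (f i) * y + f i * d y.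
  by apply: (eq_lin_span (lin_mull _) (lin_leib_l _)) => j; apply: d_f.
move=> x Sx y Sy; move: x Sx; apply: (eq_lin_span (lin_mulr y) (lin_leib_r y)) => i.
exact: leib_f.
Qed.
End Derivations.

Section IntPower.
Variables (R : pzRingType) (t ti : R).
Hypotheses (t_ti : t * ti = 1) (ti_t : ti * t = 1).

Lemma zpowSr z : zpow t ti (z + 1) = zpow t ti z * t.
Proof.
case: z => [k | [|k]].
- have -> : k%:Z + 1 = k.+1 by lia.
  by rewrite /= exprSr.
- by rewrite /= expr1 ti_t.
have -> : Negz k.+1 + 1 = Negz k by rewrite !NegzE; lia.
by rewrite /= [in RHS]exprSr -mulrA ti_t mulr1.
Qed.

Lemma zpowNr z : zpow t ti (z - 1) = zpow t ti z * ti.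
Proof.
case: z => [[|k] | k].
- by rewrite /= mul1r expr1.
- have -> : (k.+1)%:Z - 1 = k by lia.
  by rewrite /= exprSr -mulrA t_ti mulr1.
- have -> : Negz k - 1 = Negz k.+1 by rewrite !NegzE; lia.
  by rewrite /= exprSr.
Qed.

Lemma zpowD z w : zpow t ti (z + w) = zpow t ti z * zpow t ti w.
Proof.
elim/int_rect: w => [|k IH|k IH]; first by rewrite addr0 mulr1.
  have -> : (k.+1)%:Z = k%:Z + 1 by lia.
  by rewrite addrA !zpowSr IH mulrA.
have -> : - (k.+1)%:Z = - k%:Z - 1 by lia.
by rewrite addrA !zpowNr IH mulrA.
Qed.
End IntPower.

Section QuasiCommutation.
Variables (K : fieldType) (R : algType K).

Definition qcomm (x y : R) := exists2 k : K, k != 0 & x * y = k *: (y * x).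

Lemma qcomm_sym x y : qcomm x y -> qcomm y x.
Proof.
move=> [k k_neq0 xy]; exists k^-1; first by rewrite invr_neq0.
by rewrite xy scalerA mulVf // scale1r.
Qed.

Lemma qcommr1 x : qcomm x 1.
Proof. by exists 1; rewrite ?oner_neq0 // mulr1 mul1r scale1r. Qed.

Lemma qcommrM x y z : qcomm x y -> qcomm x z -> qcomm x (y * z).
Proof.
move=> [k k_neq0 xy] [l l_neq0 xz]; exists (k * l); first by rewrite mulf_neq0.
by rewrite mulrA xy -scalerAl -(mulrA y x z) xz -scalerAr scalerA mulrA.
Qed.

Lemma qcommrX x y k : qcomm x y -> qcomm x (y ^+ k).
Proof.
move=> xy; elim: k => [|k IH]; first by rewrite expr0; apply: qcommr1.
by rewrite exprS; apply: qcommrM.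
Qed.

Lemma qcommrV x y y' : y * y' = 1 -> y' * y = 1 -> qcomm x y -> qcomm x y'.
Proof.
move=> yy' y'y [k k_neq0 xy]; exists k^-1; first by rewrite invr_neq0.
have : y' * x = k *: (x * y').
  by rewrite -[y' * x]mulr1 -yy' mulrA -(mulrA y') xy scalerAr scalerAl mulrA y'y mul1r.
by move=> ->; rewrite scalerA mulVf // scale1r.
Qed.

Lemma qcommr_prod (J : Type) x (s : seq J) (F : J -> R) :
  (forall j, qcomm x (F j)) -> qcomm x (\prod_(j <- s) F j).
Proof.
move=> xF; elim: s => [|j s IH]; first by rewrite big_nil; apply: qcommr1.
by rewrite big_cons; apply: qcommrM.
Qed.

Lemma qcommr_zpow x t ti z : t * ti = 1 -> ti * t = 1 -> qcomm x t ->
  qcomm x (zpow t ti z).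
Proof.
by move=> t_ti ti_t xt; case: z => k /=; apply: qcommrX => //; apply: qcommrV xt.
Qed.
End QuasiCommutation.

Lemma seq_argmax (U : eqType) (g : U -> int) (s : seq U) : s != [::] ->
  exists2 x, x \in s & forall y, y \in s -> g y <= g x.
Proof.
elim: s => // x [|x' s] IH _; first by exists x => [|y]; rewrite ?inE // => /eqP ->.
have [z zs z_max] := IH isT; have [gxz | gzx] := leP (g x) (g z).
  by exists z => [|y]; rewrite inE ?zs ?orbT // => /predU1P[-> | /z_max].
exists x => [|y]; rewrite inE ?eqxx // => /predU1P[-> // | /z_max gyz].
exact: le_trans gyz (ltW gzx).
Qed.

Definition dot (k : nat) (a b : {ffun 'I_k -> int}) : int := \sum_i a i * b i.

Lemma dot0r k (a : {ffun 'I_k -> int}) : dot a 0 = 0.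
Proof. by rewrite /dot big1 // => i _; rewrite ffunE mulr0. Qed.

Lemma dotDr k (a b c : {ffun 'I_k -> int}) : dot a (b + c) = dot a b + dot a c.
Proof. by rewrite /dot -big_split; apply: eq_bigr => i _; rewrite ffunE mulrDr. Qed.

Lemma dotBr k (a b c : {ffun 'I_k -> int}) : dot a (b - c) = dot a b - dot a c.
Proof. by rewrite /dot -sumrB; apply: eq_bigr => i _; rewrite !ffunE mulrBr. Qed.

Lemma dot_gt0 k (a : {ffun 'I_k -> int}) : a != 0 -> 0 < dot a a.
Proof.
move=> a_neq0; have [i ai] : exists i, a i != 0.
  apply/existsP; apply: contraR a_neq0 => /existsPn a0.
  by apply/eqP/ffunP => i; rewrite ffunE; apply/eqP; rewrite -[_ == 0]negbK a0.
rewrite /dot (bigD1 i) //= ltr_wpDr ?sumr_ge0 // => [j _|]; first by rewrite -expr2 sqr_ge0.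
by move: ai; nia.
Qed.

Section QuantumTorus.
Variables (K : fieldType) (R : algType K) (n m : nat) (q : 'I_n -> 'I_n -> K)
  (T Ti : 'I_n -> R) (X : 'I_m -> R).
Hypothesis torus : qtorus_poly q T Ti X.

Local Notation A := {ffun 'I_n -> int}.
Local Notation B := {ffun 'I_m -> nat}.
Local Notation tm := (tmono T Ti).
Local Notation xm := (xmono X).
Local Notation mono := (txmono T Ti X).
Local Notation Tpow i := (zpow (T i) (Ti i)).

Lemma q_neq0 i j : q i j != 0.
Proof.
case: torus => -[_ q_inv] _; apply/eqP => qij0.
by have /eqP := q_inv i j; rewrite qij0 mul0r eq_sym oner_eq0.
Qed.
Lemma T_Ti i : T i * Ti i = 1. Proof. by case: torus => _ [/(_ i)[]]. Qed.
Lemma Ti_T i : Ti i * T i = 1. Proof. by case: torus => _ [/(_ i)[]]. Qed.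
Lemma mulTT i j : T j * T i = q i j *: (T i * T j).
Proof. by case: torus => _ [_ [TT _]]. Qed.
Lemma X_central j : central (X j). Proof. by case: torus => _ [_ [_ [XC _]]]. Qed.
Lemma mono_span r : in_span mono r. Proof. by case: torus => _ [_ [_ [_ [span _]]]]. Qed.
Lemma mono_free : lin_indep mono. Proof. by case: torus => _ [_ [_ [_ [_ free]]]]. Qed.

Local Notation cf := (bcoord mono_span).
Local Notation cfD := (bcoordD mono_span mono_free).
Local Notation cfB := (bcoordB mono_span mono_free).
Local Notation cfZ := (bcoordZ mono_span mono_free).
Local Notation cf0 := (bcoord0 mono_span mono_free).
Local Notation cf_mono := (bcoord_f mono_span mono_free).
Local Notation cf_lincomb := (bcoord_lincomb mono_span mono_free).
Local Notation cf_inj := (bcoord_inj (f_span := mono_span)).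

Lemma qcomm_T_Tpow k i z : qcomm (T k) (Tpow i z).
Proof.
by apply: qcommr_zpow; [exact: T_Ti | exact: Ti_T | exists (q i k); [exact: q_neq0 | exact: mulTT]].
Qed.

Lemma qcomm_Tpow i j z w : qcomm (Tpow j w) (Tpow i z).
Proof.
apply/qcomm_sym/qcommr_zpow; [exact: T_Ti | exact: Ti_T | exact/qcomm_sym/qcomm_T_Tpow].
Qed.

Lemma qcomm_T_tmono k a : qcomm (T k) (tm a).
Proof. by apply: qcommr_prod => i; apply: qcomm_T_Tpow. Qed.

Lemma prod_TpowM (s : seq 'I_n) (a a' : 'I_n -> int) : exists2 c : K, c != 0 &
  (\prod_(i <- s) Tpow i (a i)) * (\prod_(i <- s) Tpow i (a' i)) =
  c *: \prod_(i <- s) Tpow i (a i + a' i).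
Proof.
elim: s => [|j s [c c_neq0 IH]]; first by exists 1; rewrite ?oner_neq0 // !big_nil mulr1 scale1r.
have [k k_neq0 commute] : qcomm (\prod_(i <- s) Tpow i (a i)) (Tpow j (a' j)).
  by apply/qcomm_sym/qcommr_prod => i; apply: qcomm_Tpow.
exists (k * c); first by rewrite mulf_neq0.
rewrite !big_cons -mulrA (mulrA (\prod_(i <- s) _)) commute -scalerAl -scalerAr.
rewrite -(mulrA (Tpow j _)) IH -!scalerAr mulrA scalerA.
by rewrite -(zpowD (T_Ti j) (Ti_T j)).
Qed.

Lemma tmonoM a a' : exists2 c : K, c != 0 & tm a * tm a' = c *: tm (a + a').
Proof.
have [c c_neq0 prodM] := prod_TpowM (index_enum 'I_n) a a'.
by exists c; rewrite // /tmono prodM; congr (_ *: _); apply: eq_bigr => i _; rewrite ffunE.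
Qed.

Lemma xmono_central b : central (xm b).
Proof. by apply: central_prod => j; apply/centralX/X_central. Qed.

Lemma xmonoM b b' : xm b * xm b' = xm (b + b').
Proof.
rewrite /xmono [RHS](eq_bigr (fun j => X j ^+ b j * X j ^+ b' j)) => [|j _]; last first.
  by rewrite ffunE exprD.
elim: (index_enum _) => [|j s IH]; first by rewrite !big_nil mulr1.
rewrite !big_cons -IH -!mulrA; congr (_ * _).
by rewrite mulrA -(centralX _ (X_central j)) !mulrA.
Qed.

Lemma txmonoM a a' : exists2 c : K, c != 0 & forall b b',
  mono (a, b) * mono (a', b') = c *: mono (a + a', b + b').
Proof.
have [c c_neq0 tmM] := tmonoM a a'; exists c => // b b'.
rewrite /txmono /= -mulrA (mulrA (xm b)) (xmono_central b (tm a')) -mulrA xmonoM.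
by rewrite mulrA tmM -scalerAl.
Qed.

Definition eT k : A := [ffun i => (i == k)%:Z].
Definition eX j : B := [ffun i => nat_of_bool (i == j)].

Lemma tmono0 : tm 0 = 1.
Proof. by rewrite /tmono big1 // => i _; rewrite ffunE. Qed.
Lemma xmono0 : xm 0 = 1.
Proof. by rewrite /xmono big1 // => i _; rewrite ffunE expr0. Qed.
Lemma tmono_mono a : tm a = mono (a, 0).
Proof. by rewrite /txmono xmono0 mulr1. Qed.
Lemma one_mono : 1 = mono (0, 0).
Proof. by rewrite -tmono_mono tmono0. Qed.
Lemma mono0_xmono b : mono (0, b) = xm b.
Proof. by rewrite /txmono tmono0 mul1r. Qed.

Lemma T_mono k : T k = mono (eT k, 0).
Proof.
rewrite -tmono_mono /tmono (eq_bigr (fun i => if i == k then T k else 1)) => [|i _].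
  by rewrite -big_mkcond big_pred1_eq.
by rewrite ffunE; case: eqP => [-> | _]; rewrite /= ?expr1.
Qed.

Lemma X_mono j : X j = mono (0, eX j).
Proof.
rewrite /txmono tmono0 mul1r /xmono (eq_bigr (fun i => if i == j then X j else 1)) => [|i _].
  by rewrite -big_mkcond big_pred1_eq.
by rewrite ffunE; case: eqP => [-> | _]; rewrite ?expr1.
Qed.

Lemma cf_one p : cf p 1 = (p == (0, 0))%:R.
Proof. by rewrite one_mono cf_mono. Qed.

Lemma torus_oner_neq0 : (1 : R) != 0.
Proof.
by apply/eqP => /(congr1 (cf (0, 0))); rewrite cf_one cf0 eqxx => /eqP; rewrite oner_eq0.
Qed.

Lemma mono_inj : injective mono.
Proof.
move=> p p' /(congr1 (cf p)); rewrite !cf_mono eqxx.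
by case: eqP => // _ /eqP; rewrite oner_eq0.
Qed.

Definition conjT k (x : R) : R := T k * x * Ti k.
Definition weight k p : K := cf p (conjT k (mono p)).

Lemma conjT_is_linear k : linear (conjT k).
Proof. by move=> c x y; rewrite /conjT mulrDr mulrDl -scalerAr -scalerAl. Qed.

Lemma conjT_mulT k x : conjT k x * T k = T k * x.
Proof. by rewrite /conjT -mulrA Ti_T mulr1. Qed.

Lemma weight_mono k p : T k * tm p.1 = weight k p *: (tm p.1 * T k) /\
  conjT k (mono p) = weight k p *: mono p.
Proof.
have [c _ Tt] := qcomm_T_tmono k p.1.
have conj_p : conjT k (mono p) = c *: mono p.
  rewrite /conjT /txmono mulrA Tt -scalerAl -!mulrA -scalerAl -!mulrA.
  by rewrite (mulrA (T k)) -(xmono_central p.2) -mulrA T_Ti mulr1.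
suff -> : weight k p = c by [].
by rewrite /weight conj_p cfZ cf_mono eqxx mulr1.
Qed.

Lemma cf_conjT k p x : cf p (conjT k x) = weight k p * cf p x.
Proof.
apply: (bcoord_monomial_map mono_span mono_free (tau := id)) => // [|p'].
  exact: conjT_is_linear.
by case: (weight_mono k p').
Qed.

Lemma weight_X k b : weight k (0, b) = 1.
Proof.
rewrite /weight mono0_xmono /conjT -xmono_central -mulrA T_Ti mulr1 -mono0_xmono.
by rewrite cf_mono eqxx.
Qed.

Local Notation S := (in_span tm).

Lemma S_one : S 1.
Proof. by rewrite -tmono0; apply: in_span_f. Qed.

Lemma S_mul x y : S x -> S y -> S (x * y).
Proof.
move=> [s [c ->]] [s' [c' ->]]; rewrite mulr_suml; apply: in_span_sum => a.
rewrite -scalerAl mulr_sumr; apply/in_spanZ/in_span_sum => a'.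
rewrite -scalerAr; apply: in_spanZ; have [c0 _ ->] := tmonoM a a'.
exact/in_spanZ/in_span_f.
Qed.

Section CommutingWithT.
Variable t : R.
Hypothesis tT : forall k, T k * t = t * T k.

Lemma comm_T_Tpow i z : GRing.comm t (Tpow i z).
Proof.
have tTi : GRing.comm t (Ti i).
  by rewrite /GRing.comm -[Ti i * t]mulr1 -(T_Ti i) !mulrA -(mulrA _ t) -tT mulrA Ti_T mul1r.
by case: z => k /=; apply: commrX; rewrite // /GRing.comm tT.
Qed.

Lemma comm_T_tmono a : GRing.comm t (tm a).
Proof. by apply: commr_prod => i _; apply: comm_T_Tpow. Qed.

Lemma comm_T_S y : S y -> t * y = y * t.
Proof.
apply: (eq_lin_span (g := fun y => t * y) (h := fun y => y * t)) => [k u v | k u v | a].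
- by rewrite mulrDr scalerAr.
- by rewrite mulrDl scalerAl.
- exact: comm_T_tmono.
Qed.

Lemma comm_T_central : central t.
Proof.
move=> y; apply: (eq_lin_span (g := fun y => t * y) (h := fun y => y * t)) (mono_span y).
- by move=> k u v; rewrite mulrDr scalerAr.
- by move=> k u v; rewrite mulrDl scalerAl.
- by move=> p; rewrite /txmono mulrA comm_T_tmono -!mulrA xmono_central.
Qed.
End CommutingWithT.

Section Shift.
Variable a : A.

Definition shift (p : A * B) : A * B := (a + p.1, p.2).
Definition shift_coef p : K := cf (shift p) (tm a * mono p).

Lemma shift_inj : injective shift.
Proof. by move=> [b c] [b' c'] [/addrI -> ->]. Qed.

Lemma tmono_mulr_mono p : tm a * mono p = shift_coef p *: mono (shift p) /\ shift_coef p != 0.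
Proof.
have [c c_neq0 tmM] := tmonoM a p.1.
have tmM_p : tm a * mono p = c *: mono (shift p) by rewrite /txmono mulrA tmM -scalerAl.
by rewrite /shift_coef tmM_p cfZ cf_mono eqxx mulr1.
Qed.

Lemma cf_tmono_mulr p x : cf (shift p) (tm a * x) = shift_coef p * cf p x.
Proof.
apply: (bcoord_monomial_map mono_span mono_free (tau := shift)) => [c u v | | p'].
- by rewrite mulrDr -scalerAr.
- exact: shift_inj.
- by have [] := tmono_mulr_mono p'.
Qed.

(* For the grading [p |-> dot a p.1], multiplication by [tm a] raises degrees by
   [dot a a > 0], so the top coefficient of [tm a * y] and the bottom one of [y]
   survive in [tm a * y - y]. *)
Lemma tmono_mulr_subr_neq1 y : a != 0 -> tm a * y - y != 1.
Proof.
move=> a_neq0; apply/eqP => eq1; pose deg (p : A * B) := dot a p.1.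
have cf1 p : cf p (tm a * y - y) != 0 -> p = (0, 0).
  by rewrite eq1 cf_one; case: (p =P (0, 0)) => //= _; rewrite eqxx.
have supp_y : supp mono_span y != [::].
  apply: contra_neq torus_oner_neq0 => supp0.
  by rewrite -eq1 (bcoord_expand mono_span y) supp0 big_nil mulr0 subrr.
have [pM pM_y pM_max] := seq_argmax deg supp_y.
have [pm pm_y pm_min] := seq_argmax (fun p => - deg p) supp_y.
have /cf1[shift_pM0 _] : cf (shift pM) (tm a * y - y) != 0.
  have cf_top : cf (shift pM) y = 0.
    apply/eqP; apply: contraTT (dot_gt0 a_neq0); rewrite -mem_supp => /pM_max.
    by rewrite /deg dotDr; lia.
  rewrite cfB cf_tmono_mulr cf_top subr0 mulf_neq0 //; first by have [] := tmono_mulr_mono pM.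
  by rewrite -mem_supp.
have /cf1 pm0 : cf pm (tm a * y - y) != 0.
  pose p0 := (pm.1 - a, pm.2).
  have shift_p0 : shift p0 = pm by rewrite /shift /= addrC subrK -surjective_pairing.
  have cf_p0 : cf p0 y = 0.
    apply/eqP; apply: contraTT (dot_gt0 a_neq0); rewrite -mem_supp => /pm_min.
    by rewrite /deg /p0 /= dotBr; lia.
  by rewrite cfB -{1}shift_p0 cf_tmono_mulr cf_p0 mulr0 sub0r oppr_eq0 -mem_supp.
have pM1 : pM.1 = 0 - a by rewrite sub0r; apply/eqP; rewrite -addr_eq0 addrC shift_pM0.
have := pm_min _ pM_y; rewrite /deg pm0 pM1 dotBr dot0r sub0r opprK oppr0.
by rewrite leNgt dot_gt0.
Qed.
End Shift.

Lemma tmono_commT_eq0 a : simple_sub S -> (forall k, T k * tm a = tm a * T k) -> a = 0.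
Proof.
move=> [_ S_simple] tT; set t := tm a.
pose J x := exists2 y, S y & x = (t - 1) * y.
have tS := comm_T_S tT.
have S_t1 : S (t - 1) by apply/in_spanB/S_one/in_span_f.
have J_S x : J x -> S x by move=> [y Sy ->]; apply: S_mul.
have J0 : J 0 by exists 0; [exact: in_span0 | rewrite mulr0].
have JB x y : J x -> J y -> J (x - y).
  by move=> [x' Sx' ->] [y' Sy' ->]; exists (x' - y'); [apply: in_spanB | rewrite mulrBr].
have J_ideal b x : S b -> J x -> J (b * x) /\ J (x * b).
  move=> Sb [y Sy ->]; split; last by exists (y * b); [apply: S_mul | rewrite mulrA].
  exists (b * y); first exact: S_mul.
  by rewrite !mulrA mulrBr mulrBl mulr1 mul1r tS.
case: (S_simple J J_S J0 JB J_ideal) => [J_triv | J_full].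
  have /eqP : t - 1 = 0 by rewrite -[t - 1]mulr1; apply: J_triv; exists 1 => //; apply: S_one.
  by rewrite subr_eq0 /t tmono_mono one_mono => /eqP/mono_inj[].
have [y _ eq1] := J_full 1 S_one; apply/eqP; apply: contraTT (eqxx (1 : R)) => a_neq0.
by rewrite [X in X == _]eq1 mulrBl mul1r tmono_mulr_subr_neq1.
Qed.

Lemma weight_trivial p : simple_sub S -> (forall k, weight k p = 1) -> p.1 = 0.
Proof.
move=> S_simple w1; apply: tmono_commT_eq0 => // k.
by have [-> _] := weight_mono k p; rewrite w1 scale1r.
Qed.

Lemma cf_central r p : simple_sub S -> central r -> cf p r != 0 -> p.1 = 0.
Proof.
move=> S_simple rC cf_p; apply: weight_trivial => // k; apply/eqP.
have : weight k p * cf p r = 1 * cf p r by rewrite -cf_conjT /conjT -rC -mulrA T_Ti mulr1 mul1r.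
by move/(mulIf cf_p)->.
Qed.

Lemma central_in_span_xmono r : simple_sub S -> central r -> in_span xm r.
Proof.
move=> S_simple rC; exists (map snd (supp mono_span r)), (fun b => cf (0, b) r).
rewrite big_map {1}(bcoord_expand mono_span r); apply: eq_big_seq => -[a b].
by rewrite mem_supp => /(cf_central S_simple rC) /= ->; rewrite mono0_xmono.
Qed.

Lemma in_span_xmono_central r : in_span xm r -> central r.
Proof.
by move=> [s [c ->]]; apply: central_sum => b; apply/centralZ/xmono_central.
Qed.

Definition decr j (b : B) : B := [ffun k => if k == j then (b k).-1 else b k].

Lemma decrD j (b b' : B) : b j != 0%N -> decr j b + b' = decr j (b + b').
Proof. by move=> bj; apply/ffunP => k; rewrite !ffunE; case: eqP => // ->; case: (b j) bj. Qed.

Definition Tder i : R -> R := lin_ext mono_span (fun p => ((p.1 i)%:~R : K) *: mono p).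
Definition Xder j : R -> R :=
  lin_ext mono_span (fun p => ((p.2 j)%:R : K) *: mono (p.1, decr j p.2)).

Lemma Tder_mono i p : Tder i (mono p) = ((p.1 i)%:~R : K) *: mono p.
Proof. exact: (lin_ext_f mono_span mono_free). Qed.

Lemma Xder_mono j p : Xder j (mono p) = ((p.2 j)%:R : K) *: mono (p.1, decr j p.2).
Proof. exact: (lin_ext_f mono_span mono_free). Qed.

Lemma Tder_is_linear k : linear (Tder k).
Proof. exact: (lin_ext_is_linear mono_span mono_free). Qed.

Lemma Xder_is_linear k : linear (Xder k).
Proof. exact: (lin_ext_is_linear mono_span mono_free). Qed.

Lemma Tder_is_derivation i : is_derivation (Tder i).
Proof.
apply: (derivation_span mono_span (Tder_is_linear i)) => -[a b] [a' b'].
have [c _ monoM] := txmonoM a a'.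
rewrite monoM (linZ (Tder_is_linear i)) !Tder_mono /= -scalerAl -scalerAr monoM.
by rewrite ffunE intrD scalerDl scalerDr !scalerA mulrC [c * _]mulrC.
Qed.

Lemma Xder_is_derivation j : is_derivation (Xder j).
Proof.
apply: (derivation_span mono_span (Xder_is_linear j)) => -[a b] [a' b'].
have [c _ monoM] := txmonoM a a'.
rewrite monoM (linZ (Xder_is_linear j)) !Xder_mono /= -scalerAl -scalerAr !monoM.
have decr_l : (b j)%:R *: mono (a + a', decr j b + b') =
    ((b j)%:R : K) *: mono (a + a', decr j (b + b')).
  by case: (eqVneq (b j) 0%N) => [-> | bj]; rewrite ?scale0r // decrD.
have decr_r : (b' j)%:R *: mono (a + a', b + decr j b') =
    ((b' j)%:R : K) *: mono (a + a', decr j (b + b')).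
  case: (eqVneq (b' j) 0%N) => [-> | bj]; first by rewrite !scale0r.
  by rewrite [b + _]addrC decrD // [b' + b]addrC.
rewrite ffunE natrD !(scalerA _ c) -!(mulrC c) -!scalerA decr_l decr_r.
by rewrite -scalerDr -scalerDl.
Qed.

Lemma Tder_Xder_families : is_Dfamily T X Tder /\ is_Pfamily T X Xder.
Proof.
split=> i; (split; [exact: Tder_is_derivation || exact: Xder_is_derivation | split => k]).
- by rewrite T_mono Tder_mono /= ffunE; case: (i =P k); rewrite ?scale1r ?scale0r.
- by rewrite X_mono Tder_mono /= ffunE scale0r.
- by rewrite T_mono Xder_mono /= ffunE scale0r.
- rewrite X_mono Xder_mono /= ffunE; case: (i =P k) => [<- | _]; last by rewrite scale0r.
  rewrite scale1r one_mono; congr (mono (_, _)); apply/ffunP => k'.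
  by rewrite !ffunE; case: (k' =P i).
Qed.

Lemma derivation_eq0 d : is_derivation d ->
  (forall k, d (T k) = 0) -> (forall j, d (X j) = 0) -> forall x, d x = 0.
Proof.
move=> d_der dT dX x; have d_mono p : d (mono p) = 0.
  apply: der_mul_eq0 => //; apply: der_prod_eq0 => // i.
    have dTi : d (Ti i) = 0 by apply: (der_inv_eq0 d_der (T_Ti i) (Ti_T i)).
    by case: (p.1 i) => k; apply: der_expr_eq0.
  exact: der_expr_eq0.
apply: (eq_lin_span (h := fun=> 0) _ _ d_mono (mono_span x)); first by case: d_der.
by move=> k u v; rewrite scaler0 addr0.
Qed.

Lemma der_X_central d j : is_derivation d -> central (d (X j)).
Proof.
case=> _ d_mul y; have := d_mul (X j) y.
by rewrite X_central d_mul (X_central j (d y)) addrC => /addIr.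
Qed.

Definition log_der (d : R -> R) k : R := d (T k) * Ti k.

Lemma log_der_cocycle d i j : is_derivation d ->
  log_der d j + conjT j (log_der d i) = log_der d i + conjT i (log_der d j).
Proof.
case=> d_lin d_mul.
have dTT a b : d (T a * T b) = (log_der d a + conjT a (log_der d b)) * (T a * T b).
  rewrite d_mul mulrDl /log_der /conjT -!mulrA (mulrA (Ti a)) Ti_T mul1r.
  by rewrite Ti_T mulr1.
have := congr1 d (mulTT i j); rewrite linZ // !dTT mulTT -scalerAr.
move/(scalerI (q_neq0 i j))/(congr1 (fun v => v * (Ti j * Ti i))).
by rewrite -!mulrA (mulrA (T j)) T_Ti mul1r T_Ti !mulr1.
Qed.

Lemma cocycle_coord (u : 'I_n -> R) i j p :
  u j + conjT j (u i) = u i + conjT i (u j) ->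
  (weight j p - 1) * cf p (u i) = (weight i p - 1) * cf p (u j).
Proof.
move=> /(congr1 (cf p)); rewrite !cfD !cf_conjT => eq_ij; apply/eqP; rewrite -subr_eq0.
apply/eqP; transitivity ((cf p (u j) + weight j p * cf p (u i)) -
                         (cf p (u i) + weight i p * cf p (u j))); first by ring.
by rewrite eq_ij subrr.
Qed.

Lemma cocycle_split (u : 'I_n -> R) : simple_sub S ->
  (forall i j, u j + conjT j (u i) = u i + conjT i (u j)) ->
  exists r (z : 'I_n -> R), (forall k, central (z k)) /\
    forall k, u k = r - conjT k r + z k.
Proof.
move=> S_simple cocycle.
pose U := undup (flatten [seq supp mono_span (u k) | k <- enum 'I_n]).
have U_uniq : uniq U := undup_uniq _.
have in_U k p : cf p (u k) != 0 -> p \in U.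
  by rewrite -mem_supp mem_undup => pu; apply/flatten_mapP; exists k; rewrite ?mem_enum.
(* On a monomial of nontrivial weight the cocycle is a coboundary, with [rho] as primitive. *)
pose rho p :=
  if [pick k | weight k p != 1] is Some k then cf p (u k) / (1 - weight k p) else 0.
pose r := \sum_(p <- U) rho p *: mono p.
pose z k := \sum_(p <- U) (if p.1 == 0 then cf p (u k) else 0) *: mono p.
exists r, z; split=> [k | k].
  apply: central_sum => -[a b]; case: eqP => /= [-> | _].
    by apply: centralZ; rewrite mono0_xmono; apply: xmono_central.
  by rewrite scale0r => y; rewrite mul0r mulr0.
apply: cf_inj => -[a b]; rewrite cfD cfB cf_conjT /r /z !cf_lincomb //.
case: ifPn => [abU | abNU]; last first.
  have /negPn/eqP -> : ~~ (cf (a, b) (u k) != 0) by apply: contra abNU; apply: in_U.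
  by rewrite mulr0 !subr0 addr0.
have [-> | a_neq0] := eqVneq a 0; first by rewrite weight_X mul1r subrr add0r.
rewrite addr0 /rho; case: pickP => [k' wk' | weights1]; last first.
  by case/eqP: a_neq0; apply: (weight_trivial (p := (a, b))) => // k'; apply/eqP/negbFE/weights1.
have w_neq1 : 1 - weight k' (a, b) != 0 by rewrite subr_eq0 eq_sym.
apply: (mulIf w_neq1); rewrite mulrBl divfK // -mulrA divfK //.
have key := cocycle_coord (a, b) (cocycle k' k).
transitivity (- ((weight k' (a, b) - 1) * cf (a, b) (u k))); first by ring.
by rewrite -key; ring.
Qed.

Lemma central_coboundary_eq0 r c k : simple_sub S -> central c ->
  r - conjT k r + c = 0 -> c = 0.
Proof.
move=> S_simple cC cob0; apply: cf_inj => -[a b]; rewrite cf0.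
apply/eqP/negPn/negP => cf_c.
have /= a0 := cf_central S_simple cC cf_c; move: cf_c; rewrite a0 => /eqP; apply.
by have := congr1 (cf (0, b)) cob0; rewrite cfD cfB cf_conjT weight_X mul1r subrr add0r cf0.
Qed.

Section Decomposition.
Variables (D : 'I_n -> R -> R) (P : 'I_m -> R -> R).
Hypotheses (D_family : is_Dfamily T X D) (P_family : is_Pfamily T X P).

Definition der_comb r (z : 'I_n -> R) (w : 'I_m -> R) (x : R) : R :=
  (r * x - x * r) + \sum_(i < n) z i * D i x + \sum_(j < m) w j * P j x.

Lemma der_comb_is_derivation r z w : (forall i, central (z i)) -> (forall j, central (w j)) ->
  is_derivation (der_comb r z w).
Proof.
move=> zC wC; apply: derD; first apply: derD; first exact: der_inner.
  by apply: der_sum => i; apply: der_centralM => //; case: (D_family i).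
by apply: der_sum => j; apply: der_centralM => //; case: (P_family j).
Qed.

Lemma der_comb_T r z w k : der_comb r z w (T k) = (r - conjT k r + z k) * T k.
Proof.
have sumD : \sum_(i < n) z i * D i (T k) = z k * T k.
  rewrite (bigD1 k) //= big1 ?addr0 => [|i /negbTE ik].
    by case: (D_family k) => _ [-> _]; rewrite eqxx.
  by case: (D_family i) => _ [-> _]; rewrite ik mulr0.
have sumP : \sum_(j < m) w j * P j (T k) = 0.
  by rewrite big1 // => j _; case: (P_family j) => _ [-> _]; rewrite mulr0.
by rewrite /der_comb sumD sumP addr0 mulrDl mulrBl conjT_mulT.
Qed.

Lemma der_comb_X r z w j : der_comb r z w (X j) = w j.
Proof.
have sumD : \sum_(i < n) z i * D i (X j) = 0.
  by rewrite big1 // => i _; case: (D_family i) => _ [_ ->]; rewrite mulr0.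
have sumP : \sum_(j' < m) w j' * P j' (X j) = w j.
  rewrite (bigD1 j) //= big1 ?addr0 => [|j' /negbTE j'j].
    by case: (P_family j) => _ [_ ->]; rewrite eqxx mulr1.
  by case: (P_family j') => _ [_ ->]; rewrite j'j mulr0.
by rewrite /der_comb sumD sumP -X_central subrr !add0r.
Qed.

Lemma der_decomposition d : simple_sub S -> is_derivation d ->
  exists r (z : 'I_n -> R) (w : 'I_m -> R),
    (forall i, central (z i)) /\ (forall j, central (w j)) /\ forall x, d x = der_comb r z w x.
Proof.
move=> S_simple d_der.
have [r [z [zC log_der_split]]] := cocycle_split S_simple (fun i j => log_der_cocycle i j d_der).
pose w j := d (X j); have wC j : central (w j) by apply: der_X_central.
have diff0 := derivation_eq0 (derB d_der (der_comb_is_derivation r zC wC)).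
exists r, z, w; do 2!split=> //; move=> x; apply/eqP; rewrite -subr_eq0; apply/eqP.
apply: (diff0 _ _ x) => [k | j] /=.
  by rewrite der_comb_T -log_der_split /log_der -mulrA Ti_T mulr1 subrr.
by rewrite der_comb_X subrr.
Qed.

Lemma der_comb_eq0 r z w : simple_sub S -> (forall i, central (z i)) ->
  (forall j, central (w j)) -> (forall x, der_comb r z w x = 0) ->
  [/\ forall x, r * x - x * r = 0, forall i x, z i * D i x = 0 & forall j x, w j * P j x = 0].
Proof.
move=> S_simple zC wC comb0.
have w0 j : w j = 0 by rewrite -(der_comb_X r z w) comb0.
have cob0 k : r - conjT k r + z k = 0.
  have := comb0 (T k); rewrite der_comb_T => /(congr1 (fun v => v * Ti k)).
  by rewrite mul0r -mulrA T_Ti mulr1.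
have z0 k : z k = 0 := central_coboundary_eq0 S_simple (zC k) (cob0 k).
have rC : central r.
  apply: comm_T_central => k; rewrite -(conjT_mulT k r).
  by move/eqP: (cob0 k); rewrite z0 addr0 subr_eq0 => /eqP <-.
by split=> [x | i x | j x]; rewrite ?rC ?subrr ?z0 ?w0 ?mul0r.
Qed.
End Decomposition.
End QuantumTorus.

Theorem corollary2p2 (K : fieldType) (R : algType K) (n m : nat)
  (q : 'I_n -> 'I_n -> K) (T Ti : 'I_n -> R) (X : 'I_m -> R) :
  [pchar K] =i pred0 ->
  qtorus_poly q T Ti X ->
  simple_sub (in_span (tmono T Ti)) ->
  (forall r : R, central r <-> in_span (xmono X) r) /\
  ((exists D P, is_Dfamily T X D /\ is_Pfamily T X P) /\
   forall (D : 'I_n -> R -> R) (P : 'I_m -> R -> R),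
     is_Dfamily T X D -> is_Pfamily T X P ->
     (forall d : R -> R, is_derivation d <->
        exists (r : R) (z : 'I_n -> R) (w : 'I_m -> R),
          (forall i, central (z i)) /\ (forall j, central (w j)) /\
          forall x, d x = (r * x - x * r) + \sum_(i < n) z i * D i x
                                          + \sum_(j < m) w j * P j x) /\
     (forall (r : R) (z : 'I_n -> R) (w : 'I_m -> R),
          (forall i, central (z i)) -> (forall j, central (w j)) ->
          (forall x, (r * x - x * r) + \sum_(i < n) z i * D i x
                                     + \sum_(j < m) w j * P j x = 0) ->
          (forall x, r * x - x * r = 0) /\
          (forall i x, z i * D i x = 0) /\
          (forall j x, w j * P j x = 0))).
Proof.
move=> _ torus S_simple; split.
  move=> r; split; first exact: (central_in_span_xmono torus S_simple).
  exact: (in_span_xmono_central torus).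
split; first by exists (Tder torus), (Xder torus); exact: Tder_Xder_families.
move=> D P D_family P_family; split=> [d | r z w zC wC comb0].
  split; first exact: (der_decomposition torus D_family P_family S_simple).
  move=> [r [z [w [zC [wC d_eq]]]]].
  exact: derivation_ext (fun x => esym (d_eq x)) (der_comb_is_derivation D_family P_family r zC wC).
by have [] := der_comb_eq0 torus D_family P_family S_simple zC wC comb0.
Qed.
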